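(* Let $\mathbb A$ be an abelian category. Let $a:A_1\to A_0$, $b:B_1\to B_0$ and $b':B'_1\to B'_0$ be objects of $\mathbb A^{[1]}$ and let $(u_0,u_1):b\to b'$ be a morphism in $\mathbb A^{[1]}$ such that the induced morphisms $\mathrm{Ker}(b)\to\mathrm{Ker}(b')$ and $\mathrm{Coker}(b)\to\mathrm{Coker}(b')$ are isomorphisms. If $A_0$ is a projective object of $\mathbb A$, then the functor of groupoids $(u_0,u_1)\circ-:\mathbf{Hom}_{\mathbb A^{[1]}}(a,b)\to\mathbf{Hom}_{\mathbb A^{[1]}}(a,b')$ is an equivalence of categories.
   Context: Let $\mathbb A$ be an abelian category. The 2-category $\mathbb A^{[1]}$ has as objects the morphisms $a:A_1\to A_0$ of $\mathbb A$. For objects $a:A_1\to A_0$ and $b:B_1\to B_0$, a morphism $a\to b$ is a pair $(f_0,f_1)$ of morphisms $f_i:A_i\to B_i$ of $\mathbb A$ with $b f_1=f_0 a$; composition is componentwise. A 2-arrow $(f_0,f_1)\Rightarrow(g_0,g_1)$ between morphisms $a\to b$ is a morphism $\alpha:A_0\to B_1$ of $\mathbb A$ with $f_1-g_1=\alpha a$ and $f_0-g_0=b\alpha$; vertical composition is addition of such $\alpha$'s, and whiskering is given by $(h_0,h_1)\circ\alpha=h_1\alpha$ and $\alpha\circ(e_0,e_1)=\alpha e_0$. All 2-arrows are invertible, so each $\mathbf{Hom}_{\mathbb A^{[1]}}(a,b)$ is a groupoid. A morphism $(f_0,f_1):a\to b$ induces $\mathrm{Ker}(a)\to\mathrm{Ker}(b)$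 (restriction of $f_1$) and $\mathrm{Coker}(a)\to\mathrm{Coker}(b)$ (induced by $f_0$). *)

From HB Require Import structures.
From mathcomp Require Import all_boot all_algebra.
Set Implicit Arguments. Unset Strict Implicit. Unset Printing Implicit Defensive.
Import GRing.Theory.
Local Open Scope ring_scope.

Record preadditive := Preadditive {
  Obj : Type;
  CHom : Obj -> Obj -> zmodType;
  cmp : forall A B C : Obj, CHom B C -> CHom A B -> CHom A C;
  idm : forall A : Obj, CHom A A;
  compA : forall A B C D (h : CHom C D) (g : CHom B C) (f : CHom A B),
      cmp h (cmp g f) = cmp (cmp h g) f;
  comp1m : forall A B (f : CHom A B), cmp (idm B) f = f;
  compm1 : forall A B (f : CHom A B), cmp f (idm A) = f;
  compBl : forall A B C (g g' : CHom B C) (f : CHom A B),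
      cmp (g - g') f = cmp g f - cmp g' f;
  compBr : forall A B C (g : CHom B C) (f f' : CHom A B),
      cmp g (f - f') = cmp g f - cmp g f'
}.
Arguments cmp {p A B C}.
Arguments idm {p}.
Arguments CHom {p}.

Section Notions.
Variable C : preadditive.

Definition is_zero_obj (Z : Obj C) : Prop :=
  forall X (f : CHom Z X) (g : CHom X Z), f = 0 /\ g = 0.

Definition has_biproduct (A B : Obj C) : Prop :=
  exists (P : Obj C) (i1 : CHom A P) (i2 : CHom B P) (p1 : CHom P A) (p2 : CHom P B),
    [/\ cmp p1 i1 = idm A, cmp p2 i2 = idm B &
        cmp i1 p1 + cmp i2 p2 = idm P].

Definition is_kernel (A B K : Obj C) (f : CHom A B) (k : CHom K A) : Prop :=
  cmp f k = 0 /\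
  forall X (g : CHom X A), cmp f g = 0 -> exists! h : CHom X K, cmp k h = g.

Definition is_cokernel (A B Q : Obj C) (f : CHom A B) (q : CHom B Q) : Prop :=
  cmp q f = 0 /\
  forall X (g : CHom B X), cmp g f = 0 -> exists! h : CHom Q X, cmp h q = g.

Definition mono (A B : Obj C) (f : CHom A B) : Prop :=
  forall X (g h : CHom X A), cmp f g = cmp f h -> g = h.

Definition epi (A B : Obj C) (f : CHom A B) : Prop :=
  forall X (g h : CHom B X), cmp g f = cmp h f -> g = h.

Definition is_iso (A B : Obj C) (f : CHom A B) : Prop :=
  exists g : CHom B A, cmp g f = idm A /\ cmp f g = idm B.

Definition projective (P : Obj C) : Prop :=
  forall X Y (e : CHom X Y), epi e ->
  forall f : CHom P Y, exists g : CHom P X, cmp e g = f.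

End Notions.

Record abelian := Abelian {
  ab_pre :> preadditive;
  ab_zero : exists Z : Obj ab_pre, is_zero_obj Z;
  ab_biprod : forall A B : Obj ab_pre, has_biproduct A B;
  ab_ker : forall (A B : Obj ab_pre) (f : CHom A B),
      exists (K : Obj ab_pre) (k : CHom K A), is_kernel f k;
  ab_coker : forall (A B : Obj ab_pre) (f : CHom A B),
      exists (Q : Obj ab_pre) (q : CHom B Q), is_cokernel f q;
  ab_mono_kernel : forall (A B : Obj ab_pre) (f : CHom A B),
      mono f -> exists (D : Obj ab_pre) (g : CHom B D), is_kernel g f;
  ab_epi_cokernel : forall (A B : Obj ab_pre) (f : CHom A B),
      epi f -> exists (D : Obj ab_pre) (g : CHom D A), is_cokernel g f
}.

Section Arrows.
Variable C : preadditive.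

(* an object a : A_1 -> A_0 ; src = A_1, tgt = A_0 *)
Record arr := Arr { src : Obj C; tgt : Obj C; amap : CHom src tgt }.

(* morphisms (f_0, f_1) : a -> b with b f_1 = f_0 a *)
Definition armor (a b : arr) :=
  { f : CHom (tgt a) (tgt b) * CHom (src a) (src b) |
    cmp (amap b) f.2 = cmp f.1 (amap a) }.

Definition mor0 a b (f : armor a b) : CHom (tgt a) (tgt b) := (proj1_sig f).1.
Definition mor1 a b (f : armor a b) : CHom (src a) (src b) := (proj1_sig f).2.

Definition two_arr a b (f g : armor a b) :=
  { alpha : CHom (tgt a) (src b) |
    mor1 f - mor1 g = cmp alpha (amap a) /\
    mor0 f - mor0 g = cmp (amap b) alpha }.

Definition tval a b (f g : armor a b) (x : two_arr f g) : CHom (tgt a) (src b) :=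
  proj1_sig x.

Lemma armor_comp_proof a b c (h : armor b c) (f : armor a b) :
  cmp (amap c) (cmp (mor1 h) (mor1 f)) =
  cmp (cmp (mor0 h) (mor0 f)) (amap a).
Proof.
case: h => [[h0 h1] /= Hh]; case: f => [[f0 f1] /= Hf].
rewrite /mor0 /mor1 /=.
by rewrite compA Hh -compA Hf compA.
Qed.

Definition armor_comp a b c (h : armor b c) (f : armor a b) : armor a c :=
  exist _ (cmp (mor0 h) (mor0 f), cmp (mor1 h) (mor1 f))
        (armor_comp_proof h f).

Lemma whisk_proof a b c (h : armor b c) (f g : armor a b) (x : two_arr f g) :
  mor1 (armor_comp h f) - mor1 (armor_comp h g) = cmp (cmp (mor1 h) (tval x)) (amap a) /\
  mor0 (armor_comp h f) - mor0 (armor_comp h g) = cmp (amap c) (cmp (mor1 h) (tval x)).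
Proof.
case: x => al [H1 H0]; rewrite /tval /=.
case: h => [[h0 h1] /= Hh]; rewrite /mor0 /mor1 /= in H1 H0 *.
split.
- by rewrite -compBr H1 compA.
- by rewrite -compBr H0 !compA Hh.
Qed.

Definition whisk a b c (h : armor b c) (f g : armor a b) (x : two_arr f g)
  : two_arr (armor_comp h f) (armor_comp h g) :=
  exist _ (cmp (mor1 h) (tval x)) (whisk_proof h x).

(* Vertical composition of 2-arrows is addition, identities are 0;
   all 2-arrows are invertible, so eta and eps are automatically isos. *)
Definition postcomp_is_equivalence (a b b' : arr) (u : armor b b') : Prop :=
  exists (G : armor a b' -> armor a b)
         (Ga : forall h h' : armor a b', two_arr h h' -> two_arr (G h) (G h'))
         (eta : forall f : armor a b, two_arr f (G (armor_comp u f)))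
         (eps : forall h : armor a b', two_arr (armor_comp u (G h)) h),
    [/\
        (forall h (i : two_arr h h), tval i = 0 -> tval (Ga h h i) = 0),
        (forall h h' h'' (x : two_arr h h') (y : two_arr h' h'') (z : two_arr h h''),
            tval z = tval x + tval y ->
            tval (Ga _ _ z) = tval (Ga _ _ x) + tval (Ga _ _ y)),
        (* naturality of eta *)
        (forall f f' (x : two_arr f f'),
            tval x + tval (eta f') = tval (eta f) + tval (Ga _ _ (whisk u x))) &
        (* naturality of eps *)
        (forall h h' (y : two_arr h h'),
            tval (whisk u (Ga _ _ y)) + tval (eps h') = tval (eps h) + tval y)].

End Arrows.
Arguments Arr {C}.

From Pilot Require Import Defs.
From HB Require Import structures.
From mathcomp Require Import all_boot all_algebra.
From Stdlib Require Import ClassicalEpsilon.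
Import GRing.Theory.
Local Open Scope ring_scope.
Set Implicit Arguments. Unset Strict Implicit.

(* Post-composition with u = (u_0, u_1) : b -> b' is an equivalence of the
   groupoids Hom(a, b) -> Hom(a, b') because it is
   - faithful: u_1 is injective on Ker(b), and two 2-arrows f => g differ by
     a map into Ker(b);
   - full and essentially surjective, by one lifting property: if
     u_0 x = b' y for x : X -> B_0, y : X -> B'_1, then x = b w and y = u_1 w
     for some w.  It follows from the isomorphisms on kernels and cokernels
     by a diagram chase with generalized elements (maps lifted only up to an
     epimorphism, which exists since epis are stable under pullback).
   Projectivity of A_0 is used once: to choose f_0 with u_0 f_0 = h_0 modulo
   the image of b', the first step of essential surjectivity. *)

Section Preadditive.
Variable C : preadditive.
Implicit Types A B D X : Obj C.

Lemma comp0r A B D (g : CHom B D) : cmp g (0 : CHom A B) = 0.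
Proof. by rewrite -(subrr (0 : CHom A B)) compBr subrr. Qed.

Lemma comp0l A B D (f : CHom A B) : cmp (0 : CHom B D) f = 0.
Proof. by rewrite -(subrr (0 : CHom B D)) compBl subrr. Qed.

Lemma compDr A B D (g : CHom B D) (f f' : CHom A B) :
  cmp g (f + f') = cmp g f + cmp g f'.
Proof. by apply/eqP; rewrite -subr_eq -compBr addrK. Qed.

Lemma compDl A B D (g g' : CHom B D) (f : CHom A B) :
  cmp (g + g') f = cmp g f + cmp g' f.
Proof. by apply/eqP; rewrite -subr_eq -compBl addrK. Qed.

Lemma compNr A B D (g : CHom B D) (f : CHom A B) : cmp g (- f) = - cmp g f.
Proof. by rewrite -sub0r compBr comp0r sub0r. Qed.

Lemma compNl A B D (g : CHom B D) (f : CHom A B) : cmp (- g) f = - cmp g f.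
Proof. by rewrite -sub0r compBl comp0l sub0r. Qed.

Lemma mono_zero A B X (m : CHom A B) (g : CHom X A) :
  mono m -> cmp m g = 0 -> g = 0.
Proof. by move=> Hm H; apply: Hm; rewrite H comp0r. Qed.

Lemma epi_zero A B X (e : CHom A B) (g : CHom B X) :
  epi e -> cmp g e = 0 -> g = 0.
Proof. by move=> He H; apply: He; rewrite H comp0l. Qed.

Lemma epi_of_zero A B (e : CHom A B) :
  (forall X (g : CHom B X), cmp g e = 0 -> g = 0) -> epi e.
Proof.
move=> H X g h Hgh; apply/eqP; rewrite -subr_eq0; apply/eqP; apply: H.
by rewrite compBl Hgh subrr.
Qed.

Lemma mono_comp A B D (m : CHom A B) (n : CHom B D) :
  mono m -> mono n -> mono (cmp n m).
Proof. by move=> Hm Hn X g h H; apply: Hm; apply: Hn; rewrite !Defs.compA. Qed.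

Lemma kernel_mono A B K (f : CHom A B) (k : CHom K A) : is_kernel f k -> mono k.
Proof.
move=> [Hfk Huniv] X g h Hgh.
have Hz : cmp f (cmp k g) = 0 by rewrite Defs.compA Hfk comp0l.
case: (Huniv X _ Hz) => w [_ Hw].
by rewrite -(Hw g erefl) (Hw h (esym Hgh)).
Qed.

Lemma cokernel_epi A B Q (f : CHom A B) (q : CHom B Q) : is_cokernel f q -> epi q.
Proof.
move=> [Hqf Huniv] X g h Hgh.
have Hz : cmp (cmp g q) f = 0 by rewrite -Defs.compA Hqf comp0r.
case: (Huniv X _ Hz) => w [_ Hw].
by rewrite -(Hw g erefl) (Hw h (esym Hgh)).
Qed.

Lemma biproduct_cross A B P (i1 : CHom A P) (i2 : CHom B P) (p1 : CHom P A)
    (p2 : CHom P B) :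
  cmp p1 i1 = idm A -> cmp p2 i2 = idm B -> cmp i1 p1 + cmp i2 p2 = idm P ->
  cmp p2 i1 = 0.
Proof.
move=> H11 H22 Hid.
have E : cmp p2 i1 = cmp p2 i1 + cmp p2 i1.
  rewrite -{1}(comp1m i1) -Hid compDl compDr -!Defs.compA H11 compm1.
  by rewrite (Defs.compA p2 i2) H22 comp1m.
by apply: (addrI (cmp p2 i1)); rewrite addr0 -E.
Qed.

End Preadditive.

Section Abelian.
Variable C : abelian.
Implicit Types X Y Q I N P : Obj C.

Lemma image_minimal X Y Q I N (f : CHom X Y) (q : CHom Y Q) (m : CHom I Y)
    (n : CHom N I) (p : CHom X N) :
  is_cokernel f q -> is_kernel q m -> mono n -> cmp (cmp m n) p = f ->
  exists s : CHom I N, cmp n s = idm I.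
Proof.
move=> [Hqf Hq] [Hqm Hm] Hn Hf.
have Hmm : mono m by apply: kernel_mono (conj Hqm Hm).
case: (ab_mono_kernel (mono_comp Hn Hmm)) => D [t [Htmn Ht]].
have Htf : cmp t f = 0 by rewrite -Hf Defs.compA Htmn comp0l.
case: (Hq _ _ Htf) => t' [Ht' _].
have Htm : cmp t m = 0 by rewrite -Ht' -Defs.compA Hqm comp0r.
case: (Ht _ _ Htm) => s [Hs _].
by exists s; apply: Hmm; rewrite Defs.compA Hs compm1.
Qed.

Lemma image_epi X Y Q I (f : CHom X Y) (q : CHom Y Q) (m : CHom I Y)
    (p : CHom X I) :
  is_cokernel f q -> is_kernel q m -> cmp m p = f -> epi p.
Proof.
move=> Hq Hm Hp.
case: (ab_coker p) => R [r [Hrp Hr]].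
case: (ab_ker r) => N [n Hn].
case: (Hn.2 _ _ Hrp) => p' [Hp' _].
have [s Hs] : exists s : CHom I N, cmp n s = idm I.
  by apply: (image_minimal (p := p') Hq Hm (kernel_mono Hn)); rewrite -Defs.compA Hp' Hp.
have r0 : r = 0 by rewrite -(compm1 r) -Hs Defs.compA Hn.1 comp0l.
apply: epi_of_zero => Z g Hg.
case: (Hr _ _ Hg) => w [<- _].
by rewrite r0 comp0r.
Qed.

Lemma epi_cokernel_of_kernel P Q N W (e : CHom P Q) (j : CHom N P) (w : CHom P W) :
  epi e -> is_kernel e j -> cmp w j = 0 -> exists w' : CHom Q W, cmp w' e = w.
Proof.
move=> He [Hej Hj] Hwj.
case: (ab_epi_cokernel He) => D [g [Heg Hg]].
case: (Hj _ _ Heg) => g' [Hg' _].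
have : cmp w g = 0 by rewrite -Hg' Defs.compA Hwj comp0l.
by case/Hg => w' [Hw' _]; exists w'.
Qed.

(* Epimorphisms are stable under pullback: for p epi and any d there is an
   epi e with p z = d e.  The pullback is the kernel of p p_1 - d p_2 on the
   biproduct X (+) P. *)
Lemma pullback_epi X I P (p : CHom X I) (d : CHom P I) :
  epi p -> exists (P' : Obj C) (e : CHom P' P) (z : CHom P' X),
    epi e /\ cmp p z = cmp d e.
Proof.
move=> Hp.
case: (ab_biprod X P) => S [i1 [i2 [p1 [p2 [H11 H22 Hid]]]]].
have H21 := biproduct_cross H11 H22 Hid.
pose phi := cmp p p1 - cmp d p2.
have Hphi1 : cmp phi i1 = p.
  by rewrite /phi compBl -!Defs.compA H11 H21 comp0r compm1 subr0.
have Ephi : epi phi.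
  by move=> Z g h H; apply: Hp; rewrite -Hphi1 !Defs.compA H.
case: (ab_ker phi) => P' [k Hk].
exists P', (cmp p2 k), (cmp p1 k); split; last first.
  by apply/eqP; rewrite -subr_eq0 !Defs.compA -compBl; apply/eqP; exact: Hk.1.
apply: epi_of_zero => Z g Hg.
have : cmp (cmp g p2) k = 0 by rewrite -Defs.compA.
case/(epi_cokernel_of_kernel Ephi Hk) => g' Hg'.
have g'0 : g' = 0.
  by apply: (epi_zero Hp); rewrite -Hphi1 Defs.compA Hg' -Defs.compA H21 comp0r.
have Hgp2 : cmp g p2 = 0 by rewrite -Hg' g'0 comp0l.
by rewrite -(compm1 g) -H22 Defs.compA Hgp2 comp0l.
Qed.

Lemma pseudo_lift X Y Q P (f : CHom X Y) (q : CHom Y Q) (d : CHom P Y) :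
  is_cokernel f q -> cmp q d = 0 ->
  exists (P' : Obj C) (e : CHom P' P) (z : CHom P' X), epi e /\ cmp f z = cmp d e.
Proof.
move=> Hq Hqd.
case: (ab_ker q) => I [m Hm].
case: (Hm.2 _ _ Hq.1) => p [Hp _].
case: (Hm.2 _ _ Hqd) => d' [Hd' _].
case: (pullback_epi d' (image_epi Hq Hm Hp)) => P' [e [z [He Hz]]].
exists P', e, z; split => //.
by rewrite -Hp -Defs.compA Hz Defs.compA Hd'.
Qed.

(* On a projective source the epimorphism can be split off: d lifts along f. *)
Lemma projective_lift X Y Q P (f : CHom X Y) (q : CHom Y Q) (d : CHom P Y) :
  projective P -> is_cokernel f q -> cmp q d = 0 ->
  exists z : CHom P X, cmp f z = d.
Proof.
move=> HP Hq Hqd.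
case: (pseudo_lift Hq Hqd) => P' [e [z [He Hz]]].
case: (HP _ _ _ He (idm P)) => s Hs.
by exists (cmp z s); rewrite Defs.compA Hz -Defs.compA Hs compm1.
Qed.

End Abelian.

Lemma armor_comm (C : preadditive) (a b : arr C) (f : armor a b) :
  cmp (amap b) (mor1 f) = cmp (mor0 f) (amap a).
Proof. exact: proj2_sig f. Qed.

Section TwoArrows.
Variables (C : preadditive) (a b : arr C).
Implicit Types f g h : armor a b.

Lemma two_arr_eq0 f g (x : two_arr f g) : cmp (amap b) (Defs.tval x) = mor0 f - mor0 g.
Proof. by case: x => al [H1 H]; rewrite /Defs.tval /= H. Qed.

Lemma two_arr_eq1 f g (x : two_arr f g) : cmp (Defs.tval x) (amap a) = mor1 f - mor1 g.
Proof. by case: x => al [H H0]; rewrite /Defs.tval /= H. Qed.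

Lemma vid_proof f :
  mor1 f - mor1 f = cmp 0 (amap a) /\ mor0 f - mor0 f = cmp (amap b) 0.
Proof. by rewrite comp0l comp0r !subrr. Qed.

Definition vid f : two_arr f f := exist _ 0 (vid_proof f).

Lemma vcomp_proof f g h (x : two_arr f g) (y : two_arr g h) :
  mor1 f - mor1 h = cmp (Defs.tval x + Defs.tval y) (amap a) /\
  mor0 f - mor0 h = cmp (amap b) (Defs.tval x + Defs.tval y).
Proof.
by rewrite compDl compDr two_arr_eq0 two_arr_eq1 two_arr_eq0 two_arr_eq1
  !addrA subrK subrK.
Qed.

Definition vcomp f g h (x : two_arr f g) (y : two_arr g h) : two_arr f h :=
  exist _ (Defs.tval x + Defs.tval y) (vcomp_proof x y).

Lemma vinv_proof f g (x : two_arr f g) :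
  mor1 g - mor1 f = cmp (- Defs.tval x) (amap a) /\
  mor0 g - mor0 f = cmp (amap b) (- Defs.tval x).
Proof. by rewrite compNl compNr two_arr_eq0 two_arr_eq1 !opprB. Qed.

Definition vinv f g (x : two_arr f g) : two_arr g f :=
  exist _ (- Defs.tval x) (vinv_proof x).

End TwoArrows.

Section EquivalenceCriterion.
Variables (C : preadditive) (a b b' : arr C) (u : armor b b').

Definition postcomp_faithful : Prop :=
  forall (f g : armor a b) (x y : two_arr f g),
    Defs.tval (whisk u x) = Defs.tval (whisk u y) -> Defs.tval x = Defs.tval y.

Definition postcomp_full : Prop :=
  forall (f g : armor a b) (be : two_arr (armor_comp u f) (armor_comp u g)),
    exists al : two_arr f g, Defs.tval (whisk u al) = Defs.tval be.

Definition postcomp_esurj : Prop :=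
  forall h : armor a b', inhabited {f : armor a b & two_arr (armor_comp u f) h}.

(* A fully faithful, essentially surjective functor of groupoids is an
   equivalence: choose a preimage G h with eps h : u (G h) => h, and define G
   on 2-arrows by lifting eps h + y - eps h' through u. *)
Lemma postcomp_equivalence_criterion :
  postcomp_faithful -> postcomp_full -> postcomp_esurj ->
  postcomp_is_equivalence a u.
Proof.
move=> Hfaith Hfull Hesurj.
pose S h := epsilon (Hesurj h) (fun _ => True).
pose G h := projT1 (S h).
pose eps h : two_arr (armor_comp u (G h)) h := projT2 (S h).
pose lift f g be := proj1_sig (constructive_indefinite_description _ (Hfull f g be)).
have Hlift f g be : Defs.tval (whisk u (lift f g be)) = Defs.tval be.
  exact: proj2_sig (constructive_indefinite_description _ (Hfull f g be)).
pose Ga h h' (y : two_arr h h') : two_arr (G h) (G h') :=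
  lift _ _ (vcomp (vcomp (eps h) y) (vinv (eps h'))).
pose eta f : two_arr f (G (armor_comp u f)) := lift _ _ (vinv (eps (armor_comp u f))).
have HGa h h' (y : two_arr h h') :
    cmp (mor1 u) (Defs.tval (Ga h h' y)) =
    Defs.tval (eps h) + Defs.tval y - Defs.tval (eps h').
  exact: Hlift.
have Heta f : cmp (mor1 u) (Defs.tval (eta f)) = - Defs.tval (eps (armor_comp u f)).
  exact: Hlift.
exists G, Ga, eta, eps; split.
- move=> h i Hi; rewrite -[0]/(Defs.tval (vid (G h))); apply: Hfaith.
  by rewrite /= HGa Hi addr0 subrr comp0r.
- move=> h h' h'' x y z Hz.
  rewrite -[_ + _]/(Defs.tval (vcomp (Ga _ _ x) (Ga _ _ y))); apply: Hfaith.
  by rewrite /= compDr !HGa Hz !addrA subrK.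
- move=> f f' x.
  rewrite -[_ + Defs.tval (eta f')]/(Defs.tval (vcomp x (eta f'))).
  rewrite -[_ + Defs.tval (Ga _ _ _)]/(Defs.tval (vcomp (eta f) (Ga _ _ (whisk u x)))).
  apply: Hfaith; rewrite /= !compDr !Heta HGa /=.
  by rewrite !addrA addNr add0r.
- by move=> h h' y; rewrite /= HGa subrK.
Qed.

End EquivalenceCriterion.

Section Comparison.
Variables (C : abelian) (b b' : arr C) (u : armor b b').

Variables (K K' : Obj C) (k : CHom K (src b)) (k' : CHom K' (src b'))
  (phi : CHom K K').
Hypotheses (Hk : is_kernel (amap b) k) (Hk' : is_kernel (amap b') k')
  (Hkphi : cmp k' phi = cmp (mor1 u) k) (Hphi : is_iso phi).

Variables (Q Q' : Obj C) (q : CHom (tgt b) Q) (q' : CHom (tgt b') Q')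
  (psi : CHom Q Q').
Hypotheses (Hq : is_cokernel (amap b) q) (Hq' : is_cokernel (amap b') q')
  (Hqpsi : cmp psi q = cmp q' (mor0 u)) (Hpsi : is_iso psi).

Lemma u1_injective_on_ker X (d : CHom X (src b)) :
  cmp (amap b) d = 0 -> cmp (mor1 u) d = 0 -> d = 0.
Proof.
move=> Hbd Hud; case: (Hk.2 _ _ Hbd) => t [Hkt _]; rewrite -Hkt in Hud *.
have Hphit : cmp phi t = 0.
  by apply: (mono_zero (kernel_mono Hk')); rewrite Defs.compA Hkphi -Defs.compA.
case: Hphi => phii [Hphii _].
by rewrite -(comp1m t) -Hphii -Defs.compA Hphit !comp0r.
Qed.

Lemma u1_onto_ker X (d' : CHom X (src b')) :
  cmp (amap b') d' = 0 -> exists d, cmp (amap b) d = 0 /\ cmp (mor1 u) d = d'.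
Proof.
move=> Hbd; case: (Hk'.2 _ _ Hbd) => s [Hs _].
case: Hphi => phii [_ Hphii].
exists (cmp k (cmp phii s)); split; first by rewrite Defs.compA Hk.1 comp0l.
by rewrite Defs.compA -Hkphi -Defs.compA (Defs.compA phi) Hphii comp1m.
Qed.

Lemma u0_reflects_coker X (x : CHom X (tgt b)) :
  cmp q' (cmp (mor0 u) x) = 0 -> cmp q x = 0.
Proof.
move=> H; case: Hpsi => psii [Hpsii _].
rewrite -(comp1m (cmp q x)) -Hpsii -Defs.compA (Defs.compA psi) Hqpsi.
by rewrite -Defs.compA H comp0r.
Qed.

Lemma u0_onto_coker P (h0 : CHom P (tgt b')) : projective P ->
  exists (f0 : CHom P (tgt b)) (be : CHom P (src b')),
    cmp (mor0 u) f0 - h0 = cmp (amap b') be.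
Proof.
move=> HP; case: (Hpsi) => psii [_ Hpsii].
case: (HP _ _ _ (cokernel_epi Hq) (cmp psii (cmp q' h0))) => f0 Hf0.
have Hd : cmp q' (cmp (mor0 u) f0 - h0) = 0.
  by rewrite compBr Defs.compA -Hqpsi -Defs.compA Hf0 Defs.compA Hpsii comp1m subrr.
case: (projective_lift HP Hq' Hd) => be Hbe.
by exists f0, be.
Qed.

(* We
   lift x up to an epi e, correct the lift using Ker(b) ~ Ker(b'), and
   descend along e since the corrected lift kills Ker(e). *)
Lemma lift_through_u X (x : CHom X (tgt b)) (y : CHom X (src b')) :
  cmp (amap b') y = cmp (mor0 u) x ->
  exists w : CHom X (src b), cmp (amap b) w = x /\ cmp (mor1 u) w = y.
Proof.
move=> Hy.
have Hqx : cmp q x = 0.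
  by apply: u0_reflects_coker; rewrite -Hy Defs.compA Hq'.1 comp0l.
case: (pseudo_lift Hq Hqx) => P' [e [z [He Hz]]].
have Ht : cmp (amap b') (cmp y e - cmp (mor1 u) z) = 0.
  by rewrite compBr !Defs.compA Hy armor_comm -!Defs.compA Hz subrr.
case: (u1_onto_ker Ht) => d [Hbd Hud].
have Hw0b : cmp (amap b) (z + d) = cmp x e by rewrite compDr Hz Hbd addr0.
have Hw0u : cmp (mor1 u) (z + d) = cmp y e by rewrite compDr Hud addrC subrK.
case: (ab_ker e) => N [j Hj].
have Hw0j : cmp (z + d) j = 0.
  apply: u1_injective_on_ker.
    by rewrite Defs.compA Hw0b -Defs.compA Hj.1 comp0r.
  by rewrite Defs.compA Hw0u -Defs.compA Hj.1 comp0r.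
case: (epi_cokernel_of_kernel He Hj Hw0j) => w Hw.
by exists w; split; apply: He; rewrite -Defs.compA Hw.
Qed.

Variables (a : arr C).

Lemma postcomp_u_faithful : postcomp_faithful a u.
Proof.
move=> f g x y /= Hxy; apply/eqP; rewrite -subr_eq0; apply/eqP.
apply: u1_injective_on_ker; first by rewrite compBr !two_arr_eq0 subrr.
by rewrite compBr Hxy subrr.
Qed.

Lemma postcomp_u_full : postcomp_full a u.
Proof.
move=> f g be.
have Hbe : cmp (amap b') (Defs.tval be) = cmp (mor0 u) (mor0 f - mor0 g).
  by rewrite two_arr_eq0 compBr.
case: (lift_through_u Hbe) => w [Hbw Huw].
have Hw1 : mor1 f - mor1 g = cmp w (amap a).
  apply/eqP; rewrite -subr_eq0; apply/eqP; apply: u1_injective_on_ker.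
  - by rewrite !compBr !armor_comm Defs.compA Hbw compBl !subrr.
  - by rewrite !compBr Defs.compA Huw two_arr_eq1 subrr.
by exists (exist _ w (conj Hw1 (esym Hbw))).
Qed.

Hypothesis HP : projective (tgt a).

Lemma postcomp_u_esurj : postcomp_esurj a u.
Proof.
move=> h; have [f0 [be Hbe]] := u0_onto_coker (mor0 h) HP.
have Hy : cmp (amap b') (mor1 h + cmp be (amap a)) =
          cmp (mor0 u) (cmp f0 (amap a)).
  by rewrite compDr armor_comm Defs.compA -Hbe compBl addrC subrK Defs.compA.
case: (lift_through_u Hy) => f1 [Hf1 Huf1].
pose f : armor a b := exist _ (f0, f1) Hf1.
have Hf1u : cmp (mor1 u) f1 - mor1 h = cmp be (amap a).
  by rewrite Huf1 addrC addKr.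
by constructor; exists f, be; split.
Qed.

End Comparison.

Theorem corollary2p2 (C : abelian) (a b b' : arr C) (u : armor b b')
  (Hker : exists (K : Obj C) (k : CHom K (src b)) (K' : Obj C) (k' : CHom K' (src b'))
                 (phi : CHom K K'),
      [/\ is_kernel (amap b) k, is_kernel (amap b') k',
          cmp k' phi = cmp (mor1 u) k & is_iso phi])
  (Hcoker : exists (Q : Obj C) (q : CHom (tgt b) Q) (Q' : Obj C) (q' : CHom (tgt b') Q')
                   (psi : CHom Q Q'),
      [/\ is_cokernel (amap b) q, is_cokernel (amap b') q',
          cmp psi q = cmp q' (mor0 u) & is_iso psi])
  (Hproj : projective (tgt a)) :
  postcomp_is_equivalence a u.
Proof.
case: Hker => K [k [K' [k' [phi [Hk Hk' Hkphi Hphi]]]]].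
case: Hcoker => Q [q [Q' [q' [psi [Hq Hq' Hqpsi Hpsi]]]]].
apply: postcomp_equivalence_criterion.
- exact: (postcomp_u_faithful Hk Hk' Hkphi Hphi).
- exact: (postcomp_u_full Hk Hk' Hkphi Hphi Hq Hq' Hqpsi Hpsi).
- exact: (postcomp_u_esurj Hk Hk' Hkphi Hphi Hq Hq' Hqpsi Hpsi Hproj).
Qed.
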